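(* Let $\lambda$ be a nonempty partition. (1) For every integer $k\geq 2$, \[ \frac{s_\lambda(1^k)}{k}\geq \frac{s_\lambda(1^{k-1})}{k-1}. \] (2) If moreover $2\leq \ell(\lambda)\leq k-1$, then \[ \frac{s_\lambda(1^k)}{k}\geq \frac{s_\lambda(1^{k-1})}{k-1}+\frac{1}{k}. \]
   Context: $s_\lambda$ is the Schur polynomial of $\lambda$, and $s_\lambda(1^m)$ denotes its evaluation at $(1,\dots,1)$ with $m$ ones; equivalently, $s_\lambda(1^m)$ is the number of semistandard Young tableaux of shape $\lambda$ with entries in $\{1,\dots,m\}$ (rows weakly increasing left to right, columns strictly increasing top to bottom). $\ell(\lambda)$ is the number of nonzero parts of $\lambda$. *)

From mathcomp Require Import all_boot all_order all_algebra.
Set Implicit Arguments. Unset Strict Implicit. Unset Printing Implicit Defensive.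

Definition is_partition (la : seq nat) : bool :=
  sorted geq la && all (fun p => 0 < p) la.

Definition plength (la : seq nat) : nat := size la.

(* a filling of the bounding box 'I_(size la) x 'I_(head la) with
   optional entries in {0,..,m-1} (standing for {1,..,m}) *)
Definition filling (la : seq nat) (m : nat) :=
  {ffun 'I_(size la) * 'I_(head 0 la) -> option 'I_m}.

Definition in_shape (la : seq nat) (i j : nat) : bool := j < nth 0 la i.

Definition entry m (o : option 'I_m) : nat := if o is Some x then x else 0.

Definition is_ssyt (la : seq nat) (m : nat) (T : filling la m) : bool :=
  [forall c : 'I_(size la) * 'I_(head 0 la),
     in_shape la c.1 c.2 == (T c != None)]
  && [forall i : 'I_(size la), forall j : 'I_(head 0 la), forall j' : 'I_(head 0 la),
       (j < j') && in_shape la i j' ==> (entry (T (i, j)) <= entry (T (i, j')))]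
  && [forall i : 'I_(size la), forall i' : 'I_(size la), forall j : 'I_(head 0 la),
       (i < i') && in_shape la i' j ==> (entry (T (i, j)) < entry (T (i', j)))].

(* s_la(1^m) = number of SSYT of shape la with entries in {1..m} *)
Definition schur_ones (la : seq nat) (m : nat) : nat :=
  #|[pred T : filling la m | is_ssyt T]|.

(* Let S_m be the set of SSYT of shape la with entries in {1..m}. The
   tableaux of S_k avoiding the entry k form a copy of S_(k-1); call the
   others top tableaux. Replacing every occurrence of the largest entry e of
   T in S_(k-1) by k gives a top tableau, and e together with the result
   determines T, so |S_(k-1)| <= (k-1) #top. Hence
   k |S_(k-1)| <= (k-1) (|S_(k-1)| + #top) <= (k-1) |S_k|.
   When 2 <= l(la) <= k-1, the tableau whose row r is filled with k - l(la) + r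
   is a top tableau containing k-1, so it is not obtained in this way; this
   adds k-1 to the bound, i.e. 1/k to the inequality of ratios. *)

From mathcomp Require Import all_boot all_order all_algebra.
From mathcomp Require Import zify ring.
Set Implicit Arguments. Unset Strict Implicit. Unset Printing Implicit Defensive.

Section Relabel.
Variables (la : seq nat) (m m' : nat).

Lemma is_ssyt_transfer (T : filling la m) (U : filling la m') :
  (forall c, (U c != None) = (T c != None)) ->
  (forall c c', T c' != None ->
     (entry (T c) <= entry (T c') -> entry (U c) <= entry (U c')) /\
     (entry (T c) < entry (T c') -> entry (U c) < entry (U c'))) ->
  is_ssyt T -> is_ssyt U.
Proof.
move=> eq_support mono /andP[/andP[/forallP shapeT /forallP rowsT] /forallP colsT].
have filledT (c : 'I_(size la) * 'I_(head 0 la)) : in_shape la c.1 c.2 -> T c != None.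
  by rewrite (eqP (shapeT c)).
apply/andP; split; first (apply/andP; split).
- by apply/forallP => c; rewrite eq_support; exact: shapeT.
- apply/forallP => i; apply/forallP => j; apply/forallP => j'; apply/implyP => jj'.
  have /andP[_ /(filledT (i, j')) Tij'] := jj'.
  by apply: (mono _ _ Tij').1; move/forallP/(_ j)/forallP/(_ j')/implyP/(_ jj'): (rowsT i).
- apply/forallP => i; apply/forallP => i'; apply/forallP => j; apply/implyP => ii'.
  have /andP[_ /(filledT (i', j)) Ti'j] := ii'.
  by apply: (mono _ _ Ti'j).2; move/forallP/(_ i')/forallP/(_ j)/implyP/(_ ii'): (colsT i).
Qed.

Lemma ssyt_filled (T : filling la m) c : is_ssyt T -> (T c != None) = in_shape la c.1 c.2.
Proof. by case/andP=> /andP[/forallP/(_ c)/eqP-> _] _. Qed.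

Definition relabel (f : 'I_m -> 'I_m') (T : filling la m) : filling la m' :=
  [ffun c => omap f (T c)].

Lemma relabel_inj f : injective f -> injective (relabel f).
Proof.
move=> f_inj T1 T2 /ffunP eqT; apply/ffunP => c; move: (eqT c); rewrite !ffunE.
by case: (T1 c) (T2 c) => [x|] [y|] //= [/f_inj ->].
Qed.

(* Empty cells read as entry 0, so [f] must be increasing on an initial
   segment containing 0, not merely on the entries of [T]. *)
Lemma relabel_ssyt (f : 'I_m -> 'I_m') (T : filling la m) (b : nat) :
  (forall c, entry (T c) <= b) ->
  {in [pred x : 'I_m | x <= b] &, {homo f : x y / x < y}} ->
  is_ssyt T -> is_ssyt (relabel f T).
Proof.
move=> Tb f_mono; apply: is_ssyt_transfer => [c|c c']; first by rewrite ffunE; case: (T c).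
rewrite !ffunE; have := Tb c; have := Tb c'.
case: (T c) => [x|]; case: (T c') => [y|] //= yb xb _.
  have lt_fxy : x < y -> f x < f y by apply: f_mono.
  by split=> //; rewrite leq_eqVlt => /orP[/eqP/val_inj -> // | /lt_fxy /ltnW].
split=> // y_gt0.
pose z : 'I_m := Ordinal (leq_ltn_trans (leq0n y) (ltn_ord y)).
by apply: leq_ltn_trans (leq0n (f z)) _; apply: f_mono.
Qed.

End Relabel.

Definition to_top n (k : nat) (x : 'I_n.+1) : 'I_n.+2 :=
  if x == k :> nat then ord_max else widen_ord (leqnSn _) x.

Lemma to_top_inj n k : injective (@to_top n k).
Proof.
move=> x y; rewrite /to_top; have := ltn_ord x; have := ltn_ord y.
by case: eqP => ex; case: eqP => ey lty ltx /(congr1 val) /= exy; apply: val_inj => /=; lia.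
Qed.

Lemma to_top_mono n k : {in [pred x : 'I_n.+1 | x <= k] &, {homo @to_top n k : x y / x < y}}.
Proof.
move=> x y /=; rewrite !inE /to_top => xk yk xy; have := ltn_ord x.
by case: eqP => ex; case: eqP => ey /=; lia.
Qed.

Section RaiseMax.
Variable la : seq nat.

Definition max_entry m (T : filling la m) : nat := \max_(c | T c != None) entry (T c).

Lemma leq_entry_max m (T : filling la m) c : entry (T c) <= max_entry T.
Proof. by case E: (T c) => [x|] //; rewrite -E; apply: (leq_bigmax_cond c); rewrite E. Qed.

Lemma max_entry_le m (T : filling la m.+1) : max_entry T <= m.
Proof. by apply/bigmax_leqP => c _; case: (T c) => [x|] //=; rewrite -ltnS. Qed.

Lemma max_entry_attained m (T : filling la m) c0 :
  T c0 != None -> exists c x, T c = Some x /\ x = max_entry T :> nat.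
Proof.
move=> Tc0; rewrite /max_entry (bigmax_eq_arg c0 Tc0).
case: arg_maxnP => // c; case E: (T c) => [x|] // _ _.
by exists c, x.
Qed.

Definition attains_top n (T : filling la n.+1) : bool := [exists c, T c == Some ord_max].

Definition raise_max n (T : filling la n.+1) : filling la n.+2 :=
  relabel (to_top (max_entry T)) T.

Lemma raise_max_inj n (T1 T2 : filling la n.+1) :
  max_entry T1 = max_entry T2 -> raise_max T1 = raise_max T2 -> T1 = T2.
Proof. by rewrite /raise_max => ->; apply/relabel_inj/to_top_inj. Qed.

Lemma raise_max_ssyt n (T : filling la n.+1) : is_ssyt T -> is_ssyt (raise_max T).
Proof. by apply: relabel_ssyt (leq_entry_max T) (@to_top_mono _ _). Qed.

Lemma raise_max_attains_top n (T : filling la n.+1) c0 :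
  T c0 != None -> attains_top (raise_max T).
Proof.
case/max_entry_attained => c [x [Tc ex]]; apply/existsP; exists c.
by rewrite ffunE Tc /= /to_top ex eqxx.
Qed.

Lemma widen_ssyt n (T : filling la n) :
  is_ssyt T -> is_ssyt (relabel (widen_ord (leqnSn n)) T).
Proof. by apply: relabel_ssyt (leq_entry_max T) _ => x y _ _. Qed.

Lemma widen_not_attains_top n (T : filling la n) :
  ~~ attains_top (relabel (widen_ord (leqnSn n)) T).
Proof.
apply/existsP => -[c]; rewrite ffunE; case: (T c) => [x|] //= /eqP [] ex.
by have := ltn_ord x; rewrite ex ltnn.
Qed.

End RaiseMax.

Section RowTableau.
Variable la : seq nat.
Hypothesis la_pos : all (fun p => 0 < p) la.

Lemma in_shape_col0 i : i < size la -> in_shape la i 0.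
Proof. by move=> lt_i; apply: (allP la_pos); apply: mem_nth. Qed.

Lemma head_gt0 : 0 < size la -> 0 < head 0 la.
Proof. by rewrite -nth0; apply: in_shape_col0. Qed.

Definition row_tableau m : filling la m.+1 :=
  [ffun c : 'I_(size la) * 'I_(head 0 la) =>
    if in_shape la c.1 c.2 then Some (inord (c.1 + m.+1 - size la)) else None].

Lemma row_tableau_entry m c :
  entry (row_tableau m c) = if in_shape la c.1 c.2 then c.1 + m.+1 - size la else 0.
Proof.
case: c => i j; rewrite ffunE /=; case: ifP => //= _.
by rewrite inordK //; have := ltn_ord i; lia.
Qed.

Lemma row_tableau_ssyt m : size la <= m.+1 -> is_ssyt (row_tableau m).
Proof.
move=> la_le; apply/andP; split; first (apply/andP; split).
- by apply/forallP => c; rewrite ffunE; case: ifP.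
- apply/forallP => i; apply/forallP => j; apply/forallP => j'; apply/implyP.
  case/andP=> jj' ij'; rewrite !row_tableau_entry /= ij'.
  by rewrite ifT // /in_shape; move: ij'; rewrite /in_shape; lia.
- apply/forallP => i; apply/forallP => i'; apply/forallP => j; apply/implyP.
  case/andP=> ii' i'j; rewrite !row_tableau_entry /= i'j.
  by have := ltn_ord i'; case: ifP => _; lia.
Qed.

Lemma row_tableau_attains_top m : 0 < size la -> attains_top (row_tableau m).
Proof.
move=> la_gt0; have last_row : (size la).-1 < size la by rewrite prednK.
apply/existsP; exists (Ordinal last_row, Ordinal (head_gt0 la_gt0)).
rewrite ffunE /= in_shape_col0 //; apply/eqP; congr Some.
by apply: val_inj; rewrite /= inordK; lia.
Qed.

(* A raised tableau never contains the value just below the top: its other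
   entries lie below the old maximum, which is at most that value. *)
Lemma raise_max_neq_row_tableau n (T : filling la n.+1) :
  2 <= size la -> raise_max T != row_tableau n.+1.
Proof.
move=> la_ge2; have row : (size la).-2 < size la by lia.
pose c := (Ordinal row, Ordinal (head_gt0 (ltnW la_ge2))).
apply/eqP => /ffunP/(_ c); rewrite !ffunE /= in_shape_col0 //.
have := leq_entry_max T c; have := max_entry_le T.
case: (T c) => [x|] //= le_max le_x [/(congr1 (@nat_of_ord _))].
rewrite /to_top inordK; last lia.
by case: eqP => /=; lia.
Qed.

End RowTableau.

Section Counting.
Variable la : seq nat.
Hypotheses (la_pos : all (fun p => 0 < p) la) (la_gt0 : 0 < size la).

Let corner : 'I_(size la) * 'I_(head 0 la) :=
  (Ordinal la_gt0, Ordinal (head_gt0 la_pos la_gt0)).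

Definition ssyts m := [set T : filling la m | is_ssyt T].

Definition top_ssyts n := ssyts n.+1 :&: [set T | attains_top T].

Lemma schur_onesE m : schur_ones la m = #|ssyts m|.
Proof. by apply: eq_card => T; rewrite !inE. Qed.

Lemma schur_ones_add_top n : schur_ones la n + #|top_ssyts n| <= schur_ones la n.+1.
Proof.
rewrite !schur_onesE -(cardsID [set T | attains_top T] (ssyts n.+1)).
rewrite [X in _ <= X]addnC leq_add2r.
have widen_inj : injective (widen_ord (leqnSn n)) by move=> x y [] /val_inj.
rewrite -(card_imset _ (@relabel_inj la _ _ _ widen_inj)).
apply/subset_leq_card/subsetP => _ /imsetP[T + ->]; rewrite !inE => T_ssyt.
by rewrite widen_ssyt // widen_not_attains_top.
Qed.

Lemma schur_ones_le_raised n (X : {set filling la n.+2}) :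
  (forall T, is_ssyt T -> raise_max T \in X) -> schur_ones la n.+1 <= n.+1 * #|X|.
Proof.
move=> raised_in_X.
pose split_max (T : filling la n.+1) := (inord (max_entry T) : 'I_n.+1, raise_max T).
have split_max_inj : injective split_max.
  move=> T1 T2 [/(congr1 (@nat_of_ord _))]; rewrite !inordK ?ltnS ?max_entry_le //.
  exact: raise_max_inj.
have -> : n.+1 * #|X| = #|setX [set: 'I_n.+1] X| by rewrite cardsX cardsT card_ord.
rewrite schur_onesE -(card_imset _ split_max_inj).
by apply/subset_leq_card/subsetP => _ /imsetP[T + ->]; rewrite !inE => /raised_in_X ->.
Qed.

Lemma raise_max_top n (T : filling la n.+1) : is_ssyt T -> raise_max T \in top_ssyts n.+1.
Proof.
move=> T_ssyt; rewrite !inE raise_max_ssyt //=.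
by apply: (raise_max_attains_top (c0 := corner)); rewrite ssyt_filled // in_shape_col0.
Qed.

Lemma schur_ones_le_top n : schur_ones la n.+1 <= n.+1 * #|top_ssyts n.+1|.
Proof. exact: schur_ones_le_raised (@raise_max_top n). Qed.

Lemma schur_ones_lt_top n :
  2 <= size la <= n.+1 -> schur_ones la n.+1 + n.+1 <= n.+1 * #|top_ssyts n.+1|.
Proof.
case/andP=> la_ge2 la_le; set R := row_tableau la n.+1.
have R_top : R \in top_ssyts n.+1.
  by rewrite !inE row_tableau_ssyt ?row_tableau_attains_top // ltnW.
rewrite (cardsD1 R) R_top mulnDr muln1 addnC leq_add2l.
apply: schur_ones_le_raised => T T_ssyt.
by rewrite in_setD1 raise_max_top // andbT raise_max_neq_row_tableau.
Qed.

Lemma schur_ones_ratio n : schur_ones la n.+1 * n.+2 <= schur_ones la n.+2 * n.+1.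
Proof. by have := schur_ones_add_top n.+1; have := schur_ones_le_top n; nia. Qed.

Lemma schur_ones_ratio_strict n : 2 <= size la <= n.+1 ->
  schur_ones la n.+1 * n.+2 + n.+1 <= schur_ones la n.+2 * n.+1.
Proof.
by move/schur_ones_lt_top; have := schur_ones_add_top n.+1; nia.
Qed.

End Counting.

Import GRing.Theory Num.Theory.
Local Open Scope ring_scope.

Lemma ler_nat_fractions (R : numFieldType) (a b c p q : nat) :
  (0 < p)%N -> (0 < q)%N -> (a * q + c * p <= b * p)%N ->
  a%:R / p%:R + c%:R / q%:R <= b%:R / q%:R :> R.
Proof.
move=> p_gt0 q_gt0 le_abc.
have [p_neq0 q_neq0] : p%:R != 0 :> R /\ q%:R != 0 :> R by rewrite !pnatr_eq0 -!lt0n.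
have -> : a%:R / p%:R + c%:R / q%:R = (a * q + c * p)%:R / (p * q)%:R :> R.
  by rewrite natrD !natrM; field; rewrite p_neq0 q_neq0.
have -> : b%:R / q%:R = (b * p)%:R / (p * q)%:R :> R.
  by rewrite !natrM; field; rewrite p_neq0 q_neq0.
by rewrite ler_pM2r ?invr_gt0 ?ltr0n ?muln_gt0 ?p_gt0 // ler_nat.
Qed.

Theorem lemma4p1 (la : seq nat) :
  is_partition la -> la != [::] ->
  (forall k : nat, (2 <= k)%N ->
     (schur_ones la k)%:R / k%:R >= (schur_ones la k.-1)%:R / (k.-1)%:R :> rat)
  /\
  (forall k : nat, (2 <= k)%N -> (2 <= plength la <= k.-1)%N ->
     (schur_ones la k)%:R / k%:R >=
       (schur_ones la k.-1)%:R / (k.-1)%:R + 1 / k%:R :> rat).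
Proof.
case/andP=> _ la_pos; rewrite -size_eq0 -lt0n => la_gt0.
split=> -[|[|n]] // _ => [|la_bounds] /=.
- have := @ler_nat_fractions rat (schur_ones la n.+1) (schur_ones la n.+2) 0 n.+1 n.+2.
  rewrite mul0n addn0 mulr0n mul0r addr0; apply=> //; exact: schur_ones_ratio.
- by apply: (@ler_nat_fractions _ _ _ 1); rewrite // mul1n schur_ones_ratio_strict.
Qed.
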